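(* Let $F$ be a Boolean formula over $n$ variables, let $F'$ be the conjunction of $\log n$ copies of $F$ on pairwise disjoint fresh sets of variables, and let $m\ge1$. If $\varphi^{F'}_{holes}(m)$ is true, then $|\mathrm{Sol}(F')|\ge\frac{2^m}{m+1}$.
   Context: $\mathrm{Sol}(G)$ is the set of satisfying assignments of a Boolean formula $G$; $\log$ is base $2$ and $\log n$ is treated as an integer, so $F'$ has $N=n\log n$ variables. $\mathcal{H}(N,m,2)$ is a fixed explicit pairwise independent family of hash functions $\{0,1\}^N\to\{0,1\}^m$. The formula $\varphi^{F'}_{holes}(m)$ is $\exists h_1,\dots,h_{m+1}\in\mathcal{H}(N,m,2)\ \forall\alpha\in\{0,1\}^m\ \exists z\in\{0,1\}^N:\ \bigvee_{i=1}^{m+1}(F'(z)\wedge h_i(z)=\alpha)$. *)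

From mathcomp Require Import all_boot all_order all_algebra.
Set Implicit Arguments. Unset Strict Implicit. Unset Printing Implicit Defensive.

(* Assignments to N Boolean variables = bit vectors {0,1}^N. *)
Definition bv (N : nat) := {ffun 'I_N -> bool}.

(* Number of copies: log n (base 2, as an integer = floor). *)
Definition logn2 (n : nat) : nat := trunc_log 2 n.

(* F' = conjunction of k copies of F on pairwise disjoint variable blocks:
   copy j uses variables mxvec_index j i (i.e. j*n + i), i < n. *)
Definition conj_copies (n k : nat) (F : pred (bv n)) : pred (bv (k * n)) :=
  fun z => [forall j : 'I_k, F [ffun i : 'I_n => z (mxvec_index j i)]].

Definition Fprime (n : nat) (F : pred (bv n)) : pred (bv (logn2 n * n)) :=
  conj_copies (k:=logn2 n) F.

Definition Sol (N : nat) (G : pred (bv N)) : {set bv N} := [set z | G z].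

(* Pairwise independent family of hash functions {0,1}^N -> {0,1}^m:
   for the uniform choice of h in H and any x <> y, (h x, h y) is uniform. *)
Definition pairwise_indep (N m : nat) (H : {set {ffun bv N -> bv m}}) : Prop :=
  forall (x y : bv N) (a b : bv m), x != y ->
    (#|[set h in H | (h x == a) && (h y == b)]| * 2 ^ (2 * m) = #|H|)%N.

Definition phi_holes (N m : nat) (H : {set {ffun bv N -> bv m}}) (G : pred (bv N)) : Prop :=
  exists hs : 'I_m.+1 -> {ffun bv N -> bv m},
    (forall i, hs i \in H) /\
    forall alpha : bv m, exists z : bv N, exists i : 'I_m.+1, G z /\ hs i z = alpha.

From mathcomp Require Import all_boot all_order all_algebra.
Import GRing.Theory Num.Theory.
Local Open Scope ring_scope.

(* The m+1 hash functions of a witness of phi_holes jointly map Sol(F') onto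
   {0,1}^m, so 2^m <= (m+1) |Sol(F')|. *)

Lemma card_le_cover_images (I A B : finType) (f : I -> A -> B) (S : {set A}) :
  (forall b : B, exists a i, a \in S /\ f i a = b) ->
  (#|B| <= #|I| * #|S|)%N.
Proof.
move=> cover; pose g (p : I * A) := f p.1 p.2.
have onto : [set: B] \subset g @: setX [set: I] S.
  apply/subsetP => b _; have [a [i [Sa <-]]] := cover b.
  by apply/imsetP; exists (i, a); rewrite ?in_setX ?in_setT.
rewrite -cardsT -(cardsT I) -cardsX.
exact: leq_trans (subset_leq_card onto) (leq_imset_card _ _).
Qed.

Lemma phi_holes_card_Sol (N m : nat) (H : {set {ffun bv N -> bv m}})
    (G : pred (bv N)) :
  phi_holes H G -> (2 ^ m <= m.+1 * #|Sol G|)%N.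
Proof.
move=> [hs [_ cover]].
have -> : (2 ^ m = #|bv m|)%N by rewrite card_ffun card_bool card_ord.
rewrite -[m.+1]card_ord; apply: card_le_cover_images => alpha.
have [z [i [Gz <-]]] := cover alpha.
by exists z, i; rewrite inE.
Qed.

Theorem lemma5p4 (n : nat) (F : pred (bv n)) (m : nat)
    (H : {set {ffun bv (logn2 n * n) -> bv m}}) :
  pairwise_indep H -> (1 <= m)%N ->
  phi_holes H (Fprime F) ->
  (2 ^+ m / (m.+1)%:R : rat) <= (#|Sol (Fprime F)|)%:R.
Proof.
move=> _ _ /phi_holes_card_Sol le_card.
by rewrite ler_pdivrMr ?ltr0Sn // -natrX -natrM ler_nat mulnC.
Qed.
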